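(* There is an absolute constant $c>0$ such that the following holds. Let $K\ge4$ and $T\ge K^3$. Define valuations $v_i=\tfrac12+\frac{i-1}{4K-2i-2}$ for $i\in[K]$ (so $v_1=\tfrac12$, $v_K=1$), and set $\varepsilon=\frac{1}{3\sqrt{24}}\sqrt{(K-2)/T}$. For $j\in\{2,\dots,K-1\}$ let $Q_j$ be the distribution on $\{v_1,\dots,v_K\}$ with $Q_j(v_{j-1})=\frac{1}{2K-2}-\varepsilon$, $Q_j(v_j)=\frac{1}{2K-2}+\varepsilon$, $Q_j(v_K)=\tfrac12$, and $Q_j(v_i)=\frac{1}{2K-2}$ for all other $i$. Let $J$ be uniform on $\{2,\dots,K-1\}$ and $Q_\star=Q_J$. Then for every (possibly randomized) non-contextual pricing algorithm $\mathcal{A}$, $\mathbb{E}[R(T)]\ge c\sqrt{KT}$, where the expectation is over $J$, the valuations, and $\mathcal{A}$.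
   Context: Non-contextual pricing: a valuation distribution $Q_\star$ on $[0,1]$ is fixed. In each round $t=1,\dots,T$, a valuation $V_t\sim Q_\star$ is drawn i.i.d.; the seller, based on $(p_\tau,y_\tau)_{\tau<t}$, posts $p_t\in[0,1]$ and observes $y_t=\mathbf{1}\{V_t\ge p_t\}$. With $\mathsf{dem}_Q(p)=\mathbb{P}_{v\sim Q}[v\ge p]$, $\mathsf{rev}_Q(p)=p\,\mathsf{dem}_Q(p)$ and $\mathsf{gap}_Q(p)=\max_{x\in[0,1]}\mathsf{rev}_Q(x)-\mathsf{rev}_Q(p)$, the regret is $R(T)=\sum_{t=1}^T\mathsf{gap}_{Q_\star}(p_t)$. *)

From HB Require Import structures.
From mathcomp Require Import all_boot all_order all_algebra.
From mathcomp Require Import all_classical all_reals all_analysis.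
From mathcomp Require Import Rstruct.
Unset Printing Implicit Defensive.
Import Order.TTheory GRing.Theory Num.Theory.
Local Open Scope ring_scope.

Notation RR := Rdefinitions.R.

Definition val_i (K i : nat) : RR :=
  2^-1 + (i.-1)%:R / (4 * K%:R - 2 * i%:R - 2).

(* the K support points, indexed by i : 'I_K standing for the 1-based index i.+1 *)
Definition vv (K : nat) (i : 'I_K) : RR := val_i K i.+1.

Definition eps (K T : nat) : RR :=
  (3 * Num.sqrt 24)^-1 * Num.sqrt ((K%:R - 2) / T%:R).

(* Q_j(v_i), with j and i both 1-based (i = val i' + 1 for i' : 'I_K) *)
Definition Qj (K T j : nat) (i : 'I_K) : RR :=
  if i.+1 == K then 2^-1
  else if i.+1 == j.-1 then (2 * K%:R - 2)^-1 - eps K T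
  else if i.+1 == j then (2 * K%:R - 2)^-1 + eps K T
  else (2 * K%:R - 2)^-1.

Definition dem (K T j : nat) (p : RR) : RR :=
  \sum_(i < K) Qj K T j i * (if p <= vv K i then 1 else 0).
Definition rev (K T j : nat) (p : RR) : RR := p * dem K T j p.
Definition gap (K T j : nat) (p : RR) : RR :=
  sup [set rev K T j x | x in `[0, 1]%classic] - rev K T j p.

(* A deterministic policy maps the past feedback bits (y_1,...,y_{t-1}) to the
   price p_t (given the realised seed of the algorithm, past prices are
   themselves functions of past feedback). *)
Definition policy := seq bool -> RR.

Definition hist (K : nat) (alg : policy) (s : seq 'I_K) : seq bool :=
  foldl (fun h i => rcons h (alg h <= vv K i)) [::] s.

Definition regret (K T j : nat) (alg : policy) (vs : T.-tuple 'I_K) : RR :=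
  \sum_(t < T) gap K T j (alg (hist K alg (take t vs))).

(* expected regret of a deterministic policy: J uniform on {2,...,K-1},
   valuations i.i.d. from Q_J *)
Definition exp_regret (K T : nat) (alg : policy) : RR :=
  (K%:R - 2)^-1 * \sum_(2 <= j < K)
     \sum_(vs : T.-tuple 'I_K) (\prod_(t < T) Qj K T j (tnth vs t)) * regret K T j alg vs.

From Pilot Require Import Defs.
From HB Require Import structures.
From mathcomp Require Import all_boot all_order all_algebra.
From mathcomp Require Import all_classical all_reals all_analysis.
From mathcomp Require Import Rstruct.
From mathcomp Require Import ring lra zify.
Import Order.TTheory GRing.Theory Num.Theory.
Local Open Scope ring_scope.

(* Let Q_0 be Q_j without the eps perturbation.  The valuations are placed so
   that Q_0 is an equal-revenue distribution: every price in [0, 1] earns at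
   most 1/2 under Q_0.  Q_j has the same demand as Q_0 except on its "bump"
   (v_(j-1), v_j], where the demand is larger by eps, so under Q_j the price
   v_j earns 1/2 + v_j eps and every round priced outside the bump costs at
   least eps/2.  Let N_j count the rounds priced in the bump of Q_j.  An
   exponential supermartingale (a chi-square change of measure between the
   Bernoulli sale probabilities under Q_0 and Q_j) gives
   E_j[N_j] <= 8/3 (1/2 + kappa_j T) E_0[N_j] with kappa_j T of order
   K^2 / j, while the bumps are disjoint, so sum_j E_0[N_j] <= T.  Splitting
   the sum over j at j = K/4 yields sum_j E_j[N_j] <= 9/10 (K - 2) T, hence an
   average regret of at least eps T / 20, which is of order sqrt (K T). *)

(** * Expectation over the feedback tree *)

Lemma sum_tuple0 (I : finType) (V : nmodType) (f : 0.-tuple I -> V) :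
  \sum_(vs : 0.-tuple I) f vs = f [tuple].
Proof. by rewrite (big_pred1 [tuple]) // => vs; rewrite /= [vs]tuple0; apply/esym/eqP. Qed.

Lemma sum_tupleS (I : finType) (V : nmodType) n (f : n.+1.-tuple I -> V) :
  \sum_(vs : n.+1.-tuple I) f vs = \sum_(i : I) \sum_(vs : n.-tuple I) f [tuple of i :: vs].
Proof.
rewrite pair_big /= (reindex (fun p : I * n.-tuple I => [tuple of p.1 :: p.2])) //=.
exists (fun vs : n.+1.-tuple I => (thead vs, [tuple of behead vs])).
  by move=> [i vs] _ /=; congr pair; apply: val_inj.
by move=> vs _; apply: val_inj => /=; case: vs => -[|x s].
Qed.

Section PlayExpectation.
Variable alg : policy.

Fixpoint play_expect (d : RR -> RR) (h : seq bool) (n : nat) (F : seq bool -> RR) : RR :=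
  if n is n'.+1 then
    d (alg h) * play_expect d (rcons h true) n' F
    + (1 - d (alg h)) * play_expect d (rcons h false) n' F
  else F h.

Variable d : RR -> RR.

Lemma play_expect_le n h F G : (forall p, 0 <= d p <= 1) ->
  (forall y, size y = (size h + n)%N -> F y <= G y) ->
  play_expect d h n F <= play_expect d h n G.
Proof.
move=> d01; elim: n h => [|n IH] h FG /=; first by apply: FG; rewrite addn0.
have /andP[d0 d1] := d01 (alg h).
by apply: lerD; apply: ler_wpM2l; rewrite ?subr_ge0 //; apply: IH => y;
  rewrite size_rcons addSnnS; exact: FG.
Qed.

Lemma play_expect_affine n h a F G :
  play_expect d h n (fun y => a * F y + G y)
  = a * play_expect d h n F + play_expect d h n G.
Proof. by elim: n h => [|n IH] h //=; rewrite !IH; ring. Qed.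

Lemma play_expect_cst n h c : play_expect d h n (fun _ => c) = c.
Proof. by elim: n h => [|n IH] h //=; rewrite !IH; ring. Qed.

Lemma play_expect_sum n h (I : Type) (r : seq I) (P : pred I) (F : I -> seq bool -> RR) :
  play_expect d h n (fun y => \sum_(j <- r | P j) F j y)
  = \sum_(j <- r | P j) play_expect d h n (F j).
Proof. by elim: n h => [|n IH] h //=; rewrite !IH !mulr_sumr -big_split. Qed.

Definition hist_from K (h : seq bool) (s : seq 'I_K) : seq bool :=
  foldl (fun h i => rcons h (alg h <= vv K i)) h s.

Lemma sum_tuple_play_expect K (Q : 'I_K -> RR) n h F :
  \sum_(i < K) Q i = 1 ->
  \sum_(vs : n.-tuple 'I_K) (\prod_(t < n) Q (tnth vs t)) * F (hist_from K h vs)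
  = play_expect (fun p => \sum_(i < K) Q i * (if p <= vv K i then 1 else 0)) h n F.
Proof.
move=> Q1; elim: n h => [|n IH] h; first by rewrite sum_tuple0 big_ord0 mul1r.
rewrite sum_tupleS /=; set dQ := (fun p : RR => _).
have round i : \sum_(vs : n.-tuple 'I_K)
    (\prod_(t < n.+1) Q (tnth [tuple of i :: vs] t)) * F (hist_from K h [tuple of i :: vs])
    = Q i * play_expect dQ (rcons h (alg h <= vv K i)) n F.
  rewrite -IH mulr_sumr; apply: eq_bigr => vs _.
  rewrite big_ord_recl /= -mulrA; congr (_ * (_ * _)).
  by apply: eq_bigr => t _; rewrite (tnth_nth (tnth_default vs t)) /= -tnth_nth.
rewrite (eq_bigr _ (fun i _ => round i)).
rewrite (eq_bigr (fun i =>
      Q i * (if alg h <= vv K i then 1 else 0) * play_expect dQ (rcons h true) n F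
    + (Q i - Q i * (if alg h <= vv K i then 1 else 0)) * play_expect dQ (rcons h false) n F));
  last by move=> i _; case: ifP => _; ring.
move: (play_expect dQ (rcons h true) n F) (play_expect dQ (rcons h false) n F) => E1 E0.
by rewrite big_split /= -!mulr_suml sumrB Q1 /dQ; ring.
Qed.

End PlayExpectation.

Lemma hist_from_cat alg K h s1 s2 :
  hist_from alg K h (s1 ++ s2) = hist_from alg K (hist_from alg K h s1) s2.
Proof. by rewrite /hist_from foldl_cat. Qed.

Lemma hist_from_extends alg K h s : exists r, hist_from alg K h s = h ++ r.
Proof.
elim: s h => [|i s IH] h /=; first by exists [::]; rewrite cats0.
have [r ->] := IH (rcons h (alg h <= vv K i)).
by exists ((alg h <= vv K i) :: r); rewrite cat_rcons.
Qed.

Lemma size_hist_from alg K h s : size (hist_from alg K h s) = (size h + size s)%N.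
Proof.
elim: s h => [|i s IH] h /=; first by rewrite addn0.
by rewrite IH size_rcons addSnnS.
Qed.

Lemma hist_take K alg (s : seq 'I_K) t : (t <= size s)%N ->
  hist K alg (take t s) = take t (hist K alg s).
Proof.
move=> ts; rewrite [hist K alg s](_ : _ = hist_from alg K [::] s) //.
rewrite -{2}(cat_take_drop t s) hist_from_cat.
have [r ->] := hist_from_extends alg K (hist_from alg K [::] (take t s)) (drop t s).
by rewrite take_size_cat // size_hist_from size_take_min; apply/minn_idPl.
Qed.

Definition fb_regret K T j (alg : policy) (y : seq bool) : RR :=
  \sum_(t < T) gap K T j (alg (take t y)).

Lemma regret_fb_regret K T j alg (vs : T.-tuple 'I_K) :
  regret K T j alg vs = fb_regret K T j alg (hist K alg vs).
Proof.
by apply: eq_bigr => t _; rewrite hist_take // size_tuple ltnW.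
Qed.

Lemma exp_regretE K T alg :
  (forall j, (2 <= j < K)%N -> \sum_(i < K) Qj K T j i = 1) ->
  exp_regret K T alg = (K%:R - 2)^-1 *
    \sum_(2 <= j < K) play_expect alg (dem K T j) [::] T (fb_regret K T j alg).
Proof.
move=> sumQ; congr (_ * _); rewrite !big_nat; apply: eq_bigr => j hj.
rewrite -(sum_tuple_play_expect alg K (Qj K T j)) ?sumQ //.
by apply: eq_bigr => vs _; rewrite regret_fb_regret.
Qed.

(** * Real inequalities *)

Section ExpInequalities.
Variable R : realType.
Implicit Types a b c k u w x y z : R.

Lemma expR_tangent x z : expR z * (1 + x - z) <= expR x.
Proof.
have -> : expR x = expR z * expR (x - z) by rewrite -exp.expRD addrCA subrr addr0.
by rewrite ler_pM2l ?expR_gt0 // -addrA expR_ge1Dx.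
Qed.

Lemma expR_convex w x y : 0 <= w <= 1 ->
  expR (w * x + (1 - w) * y) <= w * expR x + (1 - w) * expR y.
Proof.
move=> /andP[w0 w1]; set z := w * x + (1 - w) * y.
have <- : w * (expR z * (1 + x - z)) + (1 - w) * (expR z * (1 + y - z)) = expR z.
  by rewrite /z; ring.
by apply: lerD; apply: ler_wpM2l; rewrite ?subr_ge0 ?expR_tangent.
Qed.

Lemma expR_chord w c : 0 <= w <= 1 -> expR (w * c) <= 1 - w + w * expR c.
Proof.
by move=> hw; have := expR_convex w c 0 hw; rewrite mulr0 addr0 exp.expR0 mulr1 addrC.
Qed.

Lemma ln_ge_1_inv x : 0 < x -> 1 - x^-1 <= ln x.
Proof.
move=> x0; have := @le_ln1Dx R (x^-1 - 1).
rewrite addrCA subrr addr0 lnV ?posrE // => h.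
have : -1 < x^-1 - 1 by have := invr_gt0 x; rewrite x0; lra.
by move/h; lra.
Qed.

(* Change of measure between Bernoulli(w) and Bernoulli(u) at chi-square
   distance (w - u)^2 / (u (1 - u)) <= k: Jensen for Bernoulli(w) applied to
   a + ln(u/w) and b + ln((1-u)/(1-w)), followed by ln t >= 1 - 1/t. *)
Lemma expR_bernoulli_tilt w u k a b : 0 < w < 1 -> 0 < u < 1 ->
  (w - u) ^+ 2 <= k * (u * (1 - u)) ->
  expR (w * a + (1 - w) * b - k) <= u * expR a + (1 - u) * expR b.
Proof.
move=> /andP[w0 w1] /andP[u0 u1] hk.
have w'0 : 0 < 1 - w by lra.
have u'0 : 0 < 1 - u by lra.
set x := a + ln (u / w); set y := b + ln ((1 - u) / (1 - w)).
have -> : u * expR a + (1 - u) * expR b = w * expR x + (1 - w) * expR y.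
  rewrite !exp.expRD !lnK ?posrE ?divr_gt0 //.
  by field; apply/andP; split; apply/eqP; lra.
apply: le_trans (expR_convex w x y _); last by apply/andP; split; lra.
rewrite ler_expR /x /y.
have l1 := ln_ge_1_inv _ (divr_gt0 u0 w0).
have l2 := ln_ge_1_inv _ (divr_gt0 u'0 w'0).
have e : w * (1 - (u / w)^-1) + (1 - w) * (1 - ((1 - u) / (1 - w))^-1)
     = - ((w - u) ^+ 2 / (u * (1 - u))).
  by field; do ! (apply/andP; split); apply/eqP; lra.
have hk' : (w - u) ^+ 2 / (u * (1 - u)) <= k by rewrite ler_pdivrMr // mulr_gt0.
have : w * (1 - (u / w)^-1) <= w * ln (u / w) by rewrite ler_wpM2l //; lra.
have : (1 - w) * (1 - ((1 - u) / (1 - w))^-1) <= (1 - w) * ln ((1 - u) / (1 - w)).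
  by rewrite ler_wpM2l //; lra.
lra.
Qed.

Lemma expR_Nhalf_le : expR (- 2^-1) <= 5 / 8 :> R.
Proof.
have h1 : 9 / 8 <= expR (8^-1) :> R by have := expR_ge1Dx (8^-1 : R); lra.
have h2 : expR (2^-1) = expR (8^-1) ^+ 4 :> R by rewrite -expRM_natl; congr expR; field.
have h3 : (9 / 8) ^+ 4 <= expR (8^-1) ^+ 4 :> R.
  by rewrite lerXn2r // ?nnegrE ?expR_ge0 //; lra.
rewrite expRN h2 -[5/8]invrK lef_pV2 ?posrE ?exprn_gt0 ?expR_gt0 //; lra.
Qed.

End ExpInequalities.

Lemma bernoulli_shift_chi2 (R : realFieldType) (q e : R) :
  0 < q <= 2^-1 -> 0 <= e -> 7 * e <= q ->
  ((1 - q) - (1 - q + e)) ^+ 2 <= 7 / 3 * e ^+ 2 / q * ((1 - q + e) * (1 - (1 - q + e))).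
Proof.
move=> /andP[q0 q2] e0 eq.
have h : 3 / 7 * q <= (1 - q + e) * (1 - (1 - q + e)) by nra.
have e2 : 0 <= e ^+ 2 by rewrite sqr_ge0.
rewrite (_ : (1 - q - (1 - q + e)) ^+ 2 = e ^+ 2); last by ring.
rewrite mulrAC ler_pdivlMr //; nra.
Qed.

Lemma sum_le_split_at (K m : nat) (Tr B : RR) (E C : nat -> RR) :
  (1 <= m < K)%N -> 0 <= Tr -> 0 <= B ->
  (forall j, (2 <= j < K)%N ->
     [/\ E j <= Tr, 0 <= C j & E j <= 8 / 3 * (2^-1 + B / (j.-1)%:R) * C j]) ->
  \sum_(2 <= j < K) C j <= Tr ->
  \sum_(2 <= j < K) E j <= (m%:R - 1 + 8 / 3 * (2^-1 + B / m%:R)) * Tr.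
Proof.
move=> /andP[m1 mK] Tr0 B0 hEC sumC.
have m1r : (1 : RR) <= m%:R by rewrite (ler_nat _ 1).
rewrite mulrDl (big_cat_nat _ (n := m.+1)) /=; [apply: lerD | lia | lia].
  apply: le_trans (_ : \sum_(2 <= j < m.+1) Tr <= _).
    by rewrite !big_nat ler_sum // => j hj; have [] := hEC j ltac:(lia).
  rewrite sumr_const_nat -[Tr *+ _]mulr_natl natrB; last by lia.
  by rewrite -natr1 (_ : m%:R + 1 - 2 = m%:R - 1 :> RR) //; ring.
set c := 8 / 3 * (2^-1 + B / m%:R).
have c0 : 0 <= c by rewrite /c mulr_ge0 ?addr_ge0 ?divr_ge0 //; lra.
apply: le_trans (_ : \sum_(m.+1 <= j < K) c * C j <= _).
  rewrite !big_nat ler_sum // => j /andP[mj jK]; have [_ C0 hE] := hEC j ltac:(lia).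
  apply: le_trans hE _; apply: ler_wpM2r => //; apply: ler_wpM2l; first lra.
  rewrite lerD2l; apply: ler_wpM2l => //.
  have mj1 : m%:R <= (j.-1)%:R :> RR by rewrite ler_nat; lia.
  by rewrite lef_pV2 ?posrE //; lra.
rewrite -mulr_sumr ler_wpM2l //; apply: le_trans sumC.
rewrite [X in _ <= X](big_cat_nat _ (n := m.+1)) /= ?lerDr; [|lia|lia].
by rewrite big_nat sumr_ge0 // => j hj; have [] := hEC j ltac:(lia).
Qed.

(* For K <= 7 the split point m = 1 works; beyond, m = K/4 balances the two
   parts of the bound above. *)
Lemma split_point_exists K : (4 <= K)%N -> exists2 m : nat, (1 <= m < K)%N &
  m%:R - 1 + 8 / 3 * (2^-1 + (7 * (K%:R - 1) * (K%:R - 2) / 324) / m%:R)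
    <= 9 / 10 * (K%:R - 2) :> RR.
Proof.
move=> K4; case: (leqP K 7) => K7.
  exists 1%N; first lia.
  rewrite divr1.
  have : (K = 4 \/ K = 5 \/ K = 6 \/ K = 7)%N by lia.
  by case=> [->|[->|[->|->]]]; lra.
exists (K %/ 4)%N; first by have := divn_eq K 4; have := ltn_pmod K (isT : 0 < 4)%N; lia.
have := divn_eq K 4; have := ltn_pmod K (isT : 0 < 4)%N.
set m := (K %/ 4)%N => rK eK.
have hm2 : (2 : RR) <= m%:R by rewrite (ler_nat _ 2); lia.
have hK1 : 4 * m%:R <= K%:R :> RR by rewrite -natrM ler_nat; lia.
have hK2 : K%:R <= 4 * m%:R + 3 :> RR by rewrite -natrM -natrD ler_nat; lia.
set k := K%:R in hK1 hK2 *; set x := m%:R in hm2 hK1 hK2 *.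
have x0 : 0 < x by lra.
rewrite -(ler_pM2r x0).
have -> : (x - 1 + 8 / 3 * (2^-1 + 7 * (k - 1) * (k - 2) / 324 / x)) * x
   = x * (x - 1) + 8 / 3 * (x / 2 + 7 * (k - 1) * (k - 2) / 324).
  by field; apply/eqP; lra.
nra.
Qed.

(** * Valuations and the unperturbed distribution Q_0 *)

Definition ind (b : bool) : RR := if b then 1 else 0.

Lemma ind_ge0 b : 0 <= ind b. Proof. by case: b; rewrite /ind ?ler01. Qed.
Lemma ind_le1 b : ind b <= 1. Proof. by case: b; rewrite /ind ?ler01. Qed.

Lemma val_one K : val_i K 1 = 2^-1.
Proof. by rewrite /val_i mul0r addr0. Qed.

Section Valuations.
Variable K : nat.
Hypothesis K2 : (2 <= K)%N.

Let K2r : (2 : RR) <= K%:R. Proof. by rewrite (ler_nat _ 2). Qed.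

Lemma valE i : (1 <= i <= K)%N -> val_i K i = (K%:R - 1) / (2 * K%:R - i%:R - 1).
Proof.
move=> /andP[i1 iK]; have hK := K2r.
have hi1 : (1 : RR) <= i%:R by rewrite (ler_nat _ 1).
have hiK : i%:R <= K%:R :> RR by rewrite ler_nat.
rewrite /val_i.
have -> : (i.-1)%:R = i%:R - 1 :> RR by rewrite -[in RHS](prednK i1) -natr1 addrK.
by field; apply/andP; split; apply/eqP; lra.
Qed.

Lemma val_lt i i' : (1 <= i)%N -> (i < i')%N -> (i' <= K)%N -> val_i K i < val_i K i'.
Proof.
move=> i1 ii i'K; have hK := K2r.
rewrite !valE ?i'K ?(leq_trans i1 (ltnW ii)) ?i1 ?(leq_trans (ltnW ii) i'K) //.
have hi1 : (1 : RR) <= i%:R by rewrite (ler_nat _ 1).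
have hii : i%:R + 1 <= i'%:R :> RR by rewrite natr1 ler_nat.
have hiK : i'%:R <= K%:R :> RR by rewrite ler_nat.
by rewrite ltr_pM2l ?ltf_pV2 ?posrE; lra.
Qed.

Lemma val_le i i' : (1 <= i)%N -> (i <= i')%N -> (i' <= K)%N -> val_i K i <= val_i K i'.
Proof.
move=> i1; rewrite leq_eqVlt => /orP[/eqP-> //| ii] i'K.
exact/ltW/val_lt.
Qed.

Lemma val_K : val_i K K = 1.
Proof.
by have hK := K2r; rewrite valE ?leqnn ?(leq_trans _ K2) //; field; apply/eqP; lra.
Qed.

Lemma val_ge_half i : (1 <= i <= K)%N -> 2^-1 <= val_i K i.
Proof. by move=> /andP[i1 iK]; rewrite -(val_one K) val_le. Qed.

Lemma val_le1 i : (1 <= i <= K)%N -> val_i K i <= 1.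
Proof. by move=> /andP[i1 iK]; rewrite -val_K val_le. Qed.

Lemma val_ge0 i : (1 <= i <= K)%N -> 0 <= val_i K i.
Proof. by move=> hi; apply: le_trans (@val_ge_half i hi); rewrite invr_ge0 ler0n. Qed.

End Valuations.

(* [Qj K T 0] is Q_0, since no 1-based index equals 0 = 0.-1. *)
Lemma Q0E K T (i : 'I_K) : Qj K T 0 i = if i.+1 == K then 2^-1 else (2 * K%:R - 2)^-1.
Proof. by []. Qed.

Lemma QjE K T j (i : 'I_K) : (2 <= j < K)%N ->
  Qj K T j i = Qj K T 0 i + eps K T * ((i.+1 == j)%:R - (i.+1 == j.-1)%:R).
Proof.
move=> /andP[j2 jK]; rewrite /Qj /=.
by case: (i.+1 =P K) => e1; case: (i.+1 =P j.-1) => e2; case: (i.+1 =P j) => e3;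
  rewrite /=; try lia; ring.
Qed.

(* Q_0-mass of the [k] smallest valuations, for [k < K]. *)
Definition mass_below K k : RR := k%:R / (2 * K%:R - 2).

Section BaseDistribution.
Variables K T : nat.
Hypothesis K2 : (2 <= K)%N.

Let K2r : (2 : RR) <= K%:R. Proof. by rewrite (ler_nat _ 2). Qed.

Lemma Q0_ge0 i : 0 <= Qj K T 0 i.
Proof. by have hK := K2r; rewrite Q0E; case: ifP; rewrite ?invr_ge0 //; lra. Qed.

Lemma sum_Q0_tail k : (k < K)%N ->
  \sum_(i < K) Qj K T 0 i * ind (k <= i)%N = 1 - mass_below K k.
Proof.
move=> kK; have hK := K2r.
pose F i : RR := (if i.+1 == K then 2^-1 else (2 * K%:R - 2)^-1) * ind (k <= i)%N.
rewrite (eq_bigr (fun i : 'I_K => F i)) // -(big_mkord xpredT F).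
have KE : K = K.-1.+1 by rewrite prednK // (leq_trans _ K2).
have kK1 : (k <= K.-1)%N by rewrite -ltnS -KE.
rewrite [in \sum_(0 <= i < K) _]KE big_nat_recr //= (big_cat_nat _ (n := k)) //=.
rewrite big_nat big1 => [|i /andP[_ ik]]; last by rewrite /F /ind leqNgt ik mulr0.
rewrite add0r big_nat (eq_bigr (fun _ => (2 * K%:R - 2)^-1)) => [|i /andP[ki iK]];
  last by rewrite /F /ind ki mulr1 ifF //; apply/eqP; lia.
rewrite -big_nat sumr_const_nat /F /ind kK1 -KE eqxx mulr1 -[X in X + _]mulr_natr natrB //.
rewrite (_ : (K.-1)%:R = K%:R - 1 :> RR); last by rewrite [in RHS]KE -natr1 addrK.
by rewrite /mass_below; field; apply/eqP; lra.
Qed.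

Lemma sum_Q0 : \sum_(i < K) Qj K T 0 i = 1.
Proof.
have := @sum_Q0_tail 0 (leq_trans (isT : 0 < 2)%N K2).
rewrite /mass_below mul0r subr0 => <-.
by apply: eq_bigr => i _; rewrite /ind leq0n mulr1.
Qed.

Lemma val_mul_mass_below k : (k < K)%N -> val_i K k.+1 * (1 - mass_below K k) = 2^-1.
Proof.
move=> kK; have hK := K2r; have hkK : k%:R + 1 <= K%:R :> RR by rewrite natr1 ler_nat.
rewrite valE // -natr1 /mass_below.
by field; apply/andP; split; apply/eqP; lra.
Qed.

Lemma dem0_step p k : (k < K)%N -> (k = 0%N \/ val_i K k < p) -> p <= val_i K k.+1 ->
  dem K T 0 p = 1 - mass_below K k.
Proof.
move=> kK hk hp; rewrite /dem -(sum_Q0_tail _ kK); apply: eq_bigr => i _.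
congr (_ * _); rewrite /ind /vv; case: (leqP k i) => ki.
  by rewrite (le_trans hp) // val_le.
case: hk => [k0|hk]; first by move: ki; rewrite k0.
case: ifP => // hpi; have := le_lt_trans (@val_le K K2 i.+1 k (ltn0Sn i) ki (ltnW kK)) hk.
by rewrite (le_gtF hpi).
Qed.

Lemma dem0_gt1 p : 1 < p -> dem K T 0 p = 0.
Proof.
move=> p1; rewrite /dem big1 // => i _.
rewrite /vv ifF ?mulr0 //; apply/negbTE; rewrite -ltNge.
by apply: le_lt_trans p1; apply: val_le1; rewrite /= ?ltn_ord.
Qed.

Lemma rev0_le_half p : 0 <= p -> p * dem K T 0 p <= 2^-1.
Proof.
move=> p0; have hK := K2r; case: (ltP 1 p) => p1; first by rewrite dem0_gt1 // mulr0.
have exP : exists n, p <= val_i K n.+1 by exists K.-1; rewrite prednK ?(leq_trans _ K2) // val_K.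
case: (ex_minnP exP) => m pm minm.
have mK : (m < K)%N.
  suff : (m <= K.-1)%N by lia.
  by apply: minm; rewrite prednK ?(leq_trans _ K2) // val_K.
have hm : m = 0%N \/ val_i K m < p.
  case: m pm minm mK => [|m'] pm minm mK; [by left | right].
  by rewrite ltNge; apply/negP => /minm; rewrite ltnn.
rewrite (@dem0_step p m mK hm pm) -(@val_mul_mass_below m mK).
have hmK : m%:R + 1 <= K%:R :> RR by rewrite natr1 ler_nat.
by rewrite ler_wpM2r // subr_ge0 ler_pdivrMr; lra.
Qed.

End BaseDistribution.

Lemma dem0_in01 K T p : (2 <= K)%N -> 0 <= dem K T 0 p <= 1.
Proof.
move=> K2; apply/andP; split.
  by rewrite /dem sumr_ge0 // => i _; rewrite mulr_ge0 ?Q0_ge0 //; case: ifP.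
rewrite -(@sum_Q0 K T K2) /dem ler_sum // => i _.
have := @Q0_ge0 K T K2 i; case: ifP => _; lra.
Qed.

(** * The perturbed distributions Q_j *)

Lemma dem_at0 K T j : (2 <= K)%N -> dem K T j 0 = \sum_(i < K) Qj K T j i.
Proof.
move=> K2; apply: eq_bigr => i _.
by rewrite /vv val_ge0 ?mulr1 //= ltn_ord.
Qed.

Lemma sum_val_eq_mul K (f : 'I_K -> RR) j (jK : (j < K)%N) :
  \sum_(i < K) (val i == j)%:R * f i = f (Ordinal jK).
Proof.
rewrite (bigD1 (Ordinal jK)) //= eqxx mul1r big1 ?addr0 // => i ne.
have /negbTE-> : val i != j by apply: contra ne => /eqP e; apply/eqP/val_inj.
by rewrite mul0r.
Qed.

(* The interval (v_(j-1), v_j] on which Q_j has more demand than Q_0. *)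
Definition in_bump K j (p : RR) : bool := (val_i K j.-1 < p) && (p <= val_i K j).

Lemma in_bump_eq K j j' p : (2 <= K)%N -> (2 <= j < K)%N -> (2 <= j' < K)%N ->
  in_bump K j p -> in_bump K j' p -> j = j'.
Proof.
move=> K2; wlog le_jj' : j j' / (j <= j')%N.
  by move=> H hj hj' b b'; case: (leqP j j') => h; [|apply/esym]; apply: H => //; apply: ltnW.
move=> hj hj' /andP[_ pj] /andP[pj' _]; apply/eqP; rewrite eqn_leq le_jj' leqNgt.
apply/negP => lt_jj'; have := @val_le K K2 j j'.-1 ltac:(lia) ltac:(lia) ltac:(lia).
by move/(le_trans pj)/(lt_le_trans pj'); rewrite ltxx.
Qed.

Lemma sum_ind_in_bump_le1 K p : (2 <= K)%N -> \sum_(2 <= j < K) ind (in_bump K j p) <= 1.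
Proof.
move=> K2.
have [/hasP[j0 j0in bj0] | /hasPn nb] := boolP (has (fun j => in_bump K j p) (index_iota 2 K)).
  rewrite (bigD1_seq j0) ?iota_uniq //= /ind bj0 big1_seq ?addr0 // => j /andP[jne jin].
  case: ifP => // bj; move: jne; rewrite (@in_bump_eq K j j0 p K2) ?eqxx //.
    by rewrite -mem_index_iota.
  by rewrite -mem_index_iota.
by rewrite big1_seq ?ler01 // => j /andP[_ /nb] /negbTE; rewrite /ind => ->.
Qed.

Lemma demj_split K T j p : (2 <= j < K)%N ->
  dem K T j p = dem K T 0 p + eps K T * (ind (p <= val_i K j) - ind (p <= val_i K j.-1)).
Proof.
move=> hj; have /andP[j2 jK] := hj.
have j1K : (j.-1 < K)%N by rewrite (leq_ltn_trans (leq_pred j)).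
have j2K : (j.-2 < K)%N by rewrite (leq_ltn_trans (leq_pred _) j1K).
rewrite /dem (eq_bigr (fun i : 'I_K => Qj K T 0 i * ind (p <= vv K i) +
   eps K T * ((val i == j.-1)%:R * ind (p <= vv K i)
            - (val i == j.-2)%:R * ind (p <= vv K i)))) => [|i _]; last first.
  have -> : (val i == j.-1) = (i.+1 == j) by rewrite -(eqSS i) prednK ?(leq_trans _ j2).
  have -> : (val i == j.-2) = (i.+1 == j.-1).
    by rewrite -(eqSS i) -[j.-1]prednK // -ltnS prednK ?(leq_trans _ j2).
  by rewrite QjE // mulrDl -mulrA mulrBl.
rewrite big_split /= -mulr_sumr sumrB (sum_val_eq_mul _ _ _ j1K) (sum_val_eq_mul _ _ _ j2K) /vv /=.
by rewrite prednK ?(leq_trans _ j2) // prednK // -ltnS prednK ?(leq_trans _ j2).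
Qed.

Lemma eps_ge0 K T : 0 <= eps K T.
Proof. by rewrite /eps mulr_ge0 ?invr_ge0 ?mulr_ge0 ?sqrtr_ge0. Qed.

Definition visits K j (alg : policy) (y : seq bool) : RR :=
  \sum_(0 <= t < size y) ind (in_bump K j (alg (take t y))).

Lemma visits_nil K j alg : visits K j alg [::] = 0.
Proof. by rewrite /visits big_geq. Qed.

Lemma visits_rcons K j alg y b :
  visits K j alg (rcons y b) = visits K j alg y + ind (in_bump K j (alg y)).
Proof.
rewrite /visits size_rcons big_nat_recr //= -cats1 take_size_cat //; congr (_ + _).
by rewrite !big_nat; apply: eq_bigr => t /andP[_ ht]; rewrite takel_cat // ltnW.
Qed.

Lemma visits_ge0 K j alg y : 0 <= visits K j alg y.
Proof. by rewrite /visits sumr_ge0 // => t _; apply: ind_ge0. Qed.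

Lemma visits_le_size K j alg y : visits K j alg y <= (size y)%:R.
Proof.
rewrite /visits -[X in _ <= X%:R](subn0 (size y)) -sumr_const_nat.
by rewrite ler_sum // => t _; apply: ind_le1.
Qed.

(* The bumps are disjoint. *)
Lemma sum_visits_le_size K alg y : (2 <= K)%N ->
  \sum_(2 <= j < K) visits K j alg y <= (size y)%:R.
Proof.
move=> K2; rewrite /visits exchange_big /= -[X in _ <= X%:R](subn0 (size y)).
by rewrite -sumr_const_nat ler_sum // => t _; apply: sum_ind_in_bump_le1.
Qed.

Section Instance.
Variables K T : nat.
Hypothesis K4 : (4 <= K)%N.
Hypothesis KT : (K ^ 3 <= T)%N.
Variable alg : policy.
Hypothesis alg01 : forall h, 0 <= alg h <= 1.

Lemma K_ge2 : (2 <= K)%N. Proof. exact: leq_trans K4. Qed.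
Lemma T_gt0 : (0 < T)%N.
Proof. by apply: leq_trans KT; rewrite expn_gt0 (leq_trans _ K4). Qed.
Lemma K_ge4r : (4 : RR) <= K%:R. Proof. by rewrite (ler_nat _ 4). Qed.
Lemma T_ge1r : (1 : RR) <= T%:R. Proof. by rewrite (ler_nat _ 1) T_gt0. Qed.

Lemma eps_sqr : eps K T ^+ 2 = (K%:R - 2) / (216 * T%:R).
Proof.
have hK := K_ge4r; have hT := T_ge1r.
by rewrite /eps exprMn exprVn exprMn !sqr_sqrtr ?divr_ge0 //; lra.
Qed.

(* This is where T >= K^3 is used. *)
Lemma eps_small : 14 * (K%:R - 1) * eps K T <= 1.
Proof.
have e0 := eps_ge0 K T; have hK := K_ge4r.
have hKT : K%:R ^+ 3 <= T%:R :> RR by rewrite -natrX ler_nat.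
have x0 : 0 <= 14 * (K%:R - 1) * eps K T by rewrite !mulr_ge0 //; lra.
suff : (14 * (K%:R - 1) * eps K T) ^+ 2 <= 1 by nra.
by rewrite exprMn eps_sqr mulrA ler_pdivrMr ?mul1r; nra.
Qed.

Lemma mass_below_bounds k : (1 <= k < K)%N ->
  [/\ 0 < mass_below K k, 7 * eps K T <= mass_below K k & mass_below K k <= 2^-1].
Proof.
move=> /andP[k1 kK]; have hK := K_ge4r; have es := eps_small.
have hk1 : (1 : RR) <= k%:R by rewrite (ler_nat _ 1).
have hkK : k%:R + 1 <= K%:R :> RR by rewrite natr1 ler_nat.
rewrite /mass_below ler_pdivlMr ?ler_pdivrMr ?divr_gt0; try lra.
split => //; nra.
Qed.

Section Bump.
Variable j : nat.
Hypothesis hj : (2 <= j < K)%N.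

Let j2 : (2 <= j)%N. Proof. by case/andP: hj. Qed.
Let jK : (j < K)%N. Proof. by case/andP: hj. Qed.

Lemma dem_off_bump p : ~~ in_bump K j p -> dem K T j p = dem K T 0 p.
Proof.
move=> nb; rewrite demj_split //; case h1: (p <= val_i K j.-1).
  rewrite /ind (le_trans h1) ?subrr ?mulr0 ?addr0 //.
  by apply: (@val_le K K_ge2); [lia | apply: leq_pred | apply: ltnW].
move: nb; rewrite /in_bump ltNge h1 /= => /negbTE h2.
by rewrite /ind h2 subrr mulr0 addr0.
Qed.

Lemma dem0_on_bump p : in_bump K j p -> dem K T 0 p = 1 - mass_below K j.-1.
Proof.
move=> /andP[h1 h2]; apply: dem0_step; first exact: K_ge2.
- by rewrite (leq_ltn_trans (leq_pred j)).
- by right.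
- by rewrite prednK // (leq_trans _ j2).
Qed.

Lemma demj_on_bump p : in_bump K j p -> dem K T j p = dem K T 0 p + eps K T.
Proof.
move=> /andP[h1 h2]; rewrite demj_split // /ind h2 ifF ?subr0 ?mulr1 //.
by apply/negbTE; rewrite -ltNge.
Qed.

Lemma mass_below_bump :
  [/\ 0 < mass_below K j.-1, 7 * eps K T <= mass_below K j.-1
    & mass_below K j.-1 <= 2^-1].
Proof. by apply: mass_below_bounds; apply/andP; split; lia. Qed.

Lemma demj_in01 p : 0 <= dem K T j p <= 1.
Proof.
have [b|nb] := boolP (in_bump K j p); last by rewrite dem_off_bump // dem0_in01 ?K_ge2.
have [q0 qe q1] := mass_below_bump; have e0 := eps_ge0 K T.
by rewrite demj_on_bump // dem0_on_bump //; apply/andP; split; lra.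
Qed.

Lemma sum_Qj : \sum_(i < K) Qj K T j i = 1.
Proof.
rewrite -dem_at0 ?K_ge2 // demj_split // /ind !val_ge0 ?K_ge2 //; try lia.
by rewrite subrr mulr0 addr0 dem_at0 ?sum_Q0 ?K_ge2.
Qed.

Lemma rev_vj : Defs.rev K T j (val_i K j) = 2^-1 + val_i K j * eps K T.
Proof.
have b : in_bump K j (val_i K j).
  by rewrite /in_bump lexx andbT; apply: (@val_lt K K_ge2); lia.
rewrite /Defs.rev demj_on_bump // dem0_on_bump // mulrDr.
have := @val_mul_mass_below K K_ge2 j.-1 (leq_ltn_trans (leq_pred j) jK).
by rewrite prednK ?(leq_trans _ j2) // => ->.
Qed.

(* Q_0 earns at most 1/2 at every price, and Q_j coincides with Q_0 off the
   bump while earning 1/2 + v_j eps at v_j >= 1/2. *)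
Lemma gap_ge_off_bump p : 0 <= p <= 1 -> eps K T / 2 * (1 - ind (in_bump K j p)) <= gap K T j p.
Proof.
move=> /andP[p0 p1]; rewrite /gap; set S := (X in sup X).
have ubS : has_ubound S.
  exists 1 => _ [x + <-]; rewrite /= in_itv /= => /andP[x0 x1].
  by have /andP[d0 d1] := demj_in01 x; rewrite /Defs.rev; nra.
have vj_ge := @val_ge_half K K_ge2 j ltac:(lia).
have vj_le := @val_le1 K K_ge2 j ltac:(lia).
have hp : Defs.rev K T j p <= sup S.
  by apply: ub_le_sup => //; exists p => //; rewrite /= in_itv /= p0 p1.
have hv : Defs.rev K T j (val_i K j) <= sup S.
  apply: ub_le_sup => //; exists (val_i K j) => //; rewrite /= in_itv /= vj_le andbT.
  by apply: le_trans vj_ge; rewrite invr_ge0.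
rewrite /ind; case: ifP => b; first by rewrite subrr mulr0 subr_ge0.
have := @rev0_le_half K T K_ge2 p p0; rewrite -dem_off_bump ?b // => r0.
rewrite rev_vj in hv; have := eps_ge0 K T; rewrite /Defs.rev in hp r0 *; nra.
Qed.

(** * Change of measure from Q_0 to Q_j *)

(* A bound on the chi-square distance between the sale probabilities under Q_0
   and Q_j at any price in the bump. *)
Definition kappa : RR := 7 / 3 * eps K T ^+ 2 / mass_below K j.-1.

Lemma kappa_ge0 : 0 <= kappa.
Proof.
have [q0 _ _] := mass_below_bump.
by apply: divr_ge0; [apply: mulr_ge0; [lra | exact: sqr_ge0] | exact: ltW].
Qed.

Lemma dem_on_bump_in01 p : in_bump K j p ->
  [/\ 0 < dem K T 0 p < 1, 0 < dem K T j p < 1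
    & (dem K T 0 p - dem K T j p) ^+ 2 <= kappa * (dem K T j p * (1 - dem K T j p))].
Proof.
move=> b; rewrite (demj_on_bump _ b) (dem0_on_bump _ b).
have [q0 qe q1] := mass_below_bump; have e0 := eps_ge0 K T.
split; [apply/andP; split; lra | apply/andP; split; lra |].
by apply: bernoulli_shift_chi2 => //; apply/andP.
Qed.

(* The exponential supermartingale behind the change of measure from Q_0 to
   Q_j: each round in the bump costs a factor exp(-kappa). *)
Lemma expR_visits_tilt mu h n :
  expR (- (mu + kappa) * play_expect alg (dem K T 0) h n (visits K j alg)
        + kappa * visits K j alg h)
  <= play_expect alg (dem K T j) h n (fun y => expR (- mu * visits K j alg y)).
Proof.
elim: n h => [|n IH] h /=.
  by rewrite le_eqVlt; apply/orP; left; apply/eqP; congr expR; ring.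
set w := dem K T 0 (alg h); set u := dem K T j (alg h); set N := visits K j alg h.
have IH1 := IH (rcons h true); have IH0 := IH (rcons h false).
rewrite !visits_rcons -/N in IH1 IH0; set c := ind (in_bump K j (alg h)) in IH1 IH0.
move: (play_expect _ _ (rcons h true) _ _) (play_expect _ _ (rcons h false) _ _) IH1 IH0.
move=> P1 P0 IH1 IH0.
pose a1 := - (mu + kappa) * P1 + kappa * (N + c).
pose a0 := - (mu + kappa) * P0 + kappa * (N + c).
have /andP[u0 u1] := demj_in01 (alg h); rewrite -/u in u0 u1.
have step : expR (w * a1 + (1 - w) * a0 - kappa * c) <= u * expR a1 + (1 - u) * expR a0.
  rewrite /c /ind; case: ifP => b.
    have [w01 u01 chi] := dem_on_bump_in01 _ b.
    by rewrite mulr1; apply: expR_bernoulli_tilt.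
  have uw : u = w by rewrite /u /w (dem_off_bump _ (negbT b)).
  by rewrite mulr0 subr0 -uw; apply: expR_convex; apply/andP.
apply: le_trans (le_trans step (lerD (ler_wpM2l u0 IH1) (ler_wpM2l _ IH0)));
  last by rewrite subr_ge0.
by rewrite le_eqVlt; apply/orP; left; apply/eqP; congr expR; rewrite /a1 /a0; ring.
Qed.

Lemma exp_visits_le :
  play_expect alg (dem K T j) [::] T (visits K j alg) <=
  8 / 3 * (2^-1 + kappa * T%:R) * play_expect alg (dem K T 0) [::] T (visits K j alg).
Proof.
set C := play_expect _ (dem K T 0) _ _ _; set E := play_expect _ (dem K T j) _ _ _.
have hT := T_ge1r; have k0 := kappa_ge0.
have dj01 := demj_in01.
pose mu : RR := (2 * T%:R)^-1.
have tilt := expR_visits_tilt mu [::] T; rewrite visits_nil mulr0 addr0 -/C in tilt.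
have chord : play_expect alg (dem K T j) [::] T (fun y => expR (- mu * visits K j alg y))
    <= play_expect alg (dem K T j) [::] T
         (fun y => - ((1 - expR (- 2^-1)) / T%:R) * visits K j alg y + 1).
  apply: play_expect_le => // y; rewrite add0n => sy.
  have n0 := visits_ge0 K j alg y; have := visits_le_size K j alg y; rewrite sy => n1.
  set l := visits K j alg y / T%:R.
  have l01 : 0 <= l <= 1 by rewrite divr_ge0 ?ler_pdivrMr //=; lra.
  have -> : - mu * visits K j alg y = l * - 2^-1 by rewrite /l /mu; field; apply/eqP; lra.
  apply: le_trans (@expR_chord RR l (- 2^-1) l01) _.
  by rewrite le_eqVlt; apply/orP; left; apply/eqP; rewrite /l; field; apply/eqP; lra.
rewrite play_expect_affine play_expect_cst -/E in chord.
have E0 : 0 <= E.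
  rewrite /E -(play_expect_cst alg (dem K T j) T [::] 0).
  by apply: play_expect_le => // y _; apply: visits_ge0.
have lin := expR_ge1Dx (- (mu + kappa) * C).
have eh := expR_Nhalf_le RR.
have ET0 : 0 <= E / T%:R by rewrite divr_ge0 //; lra.
have key : 3 / 8 * (E / T%:R) <= (mu + kappa) * C.
  have : (1 - expR (- 2^-1)) * (E / T%:R) <= (mu + kappa) * C.
    rewrite mulNr in lin tilt; rewrite mulNr mulrAC -mulrA in chord; lra.
  by apply: le_trans; rewrite ler_wpM2r //; lra.
have -> : E = 8 / 3 * T%:R * (3 / 8 * (E / T%:R)) by field; apply/eqP; lra.
have -> : 8 / 3 * (2^-1 + kappa * T%:R) * C = 8 / 3 * T%:R * ((mu + kappa) * C).
  by rewrite /mu; field; apply/eqP; lra.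
by rewrite ler_wpM2l // mulr_ge0 //; lra.
Qed.

(** * The regret lower bound *)

Lemma fb_regret_ge y : size y = T ->
  eps K T * T%:R / 2 - eps K T / 2 * visits K j alg y <= fb_regret K T j alg y.
Proof.
move=> sy; rewrite /fb_regret /visits sy big_mkord mulr_sumr.
have -> : eps K T * T%:R / 2 = \sum_(t < T) eps K T / 2.
  by rewrite sumr_const card_ord -mulr_natr; ring.
rewrite -sumrB ler_sum // => t _.
by have := gap_ge_off_bump _ (alg01 (take t y)); rewrite mulrBr mulr1.
Qed.

Lemma exp_fb_regret_ge :
  eps K T * T%:R / 2 - eps K T / 2 * play_expect alg (dem K T j) [::] T (visits K j alg)
  <= play_expect alg (dem K T j) [::] T (fb_regret K T j alg).
Proof.
have -> : eps K T * T%:R / 2 - eps K T / 2 * play_expect alg (dem K T j) [::] T (visits K j alg)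
    = play_expect alg (dem K T j) [::] T
        (fun y => - (eps K T / 2) * visits K j alg y + eps K T * T%:R / 2).
  by rewrite play_expect_affine play_expect_cst; ring.
by apply: play_expect_le => [|y]; [exact: demj_in01 | rewrite add0n => /fb_regret_ge; lra].
Qed.

Lemma kappa_mul_T : kappa * T%:R = 7 * (K%:R - 1) * (K%:R - 2) / 324 / (j.-1)%:R.
Proof.
have hK := K_ge4r; have hT := T_ge1r.
have hj1 : (1 : RR) <= (j.-1)%:R by rewrite (ler_nat _ 1); lia.
by rewrite /kappa /mass_below eps_sqr; field; do ! (apply/andP; split); apply/eqP; lra.
Qed.

End Bump.

Lemma sum_exp_visits0_le :
  \sum_(2 <= j < K) play_expect alg (dem K T 0) [::] T (visits K j alg) <= T%:R.
Proof.
rewrite -play_expect_sum -[X in _ <= X](play_expect_cst alg (dem K T 0) T [::] T%:R).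
apply: play_expect_le => [p|y]; first exact: (dem0_in01 _ _ _ K_ge2).
by rewrite add0n => <-; apply: sum_visits_le_size K_ge2.
Qed.

Lemma sum_exp_visits_le :
  \sum_(2 <= j < K) play_expect alg (dem K T j) [::] T (visits K j alg)
  <= 9 / 10 * (K%:R - 2) * T%:R.
Proof.
have hK := K_ge4r; have [m hm hmK] := @split_point_exists K K4.
apply: le_trans (@sum_le_split_at K m T%:R (7 * (K%:R - 1) * (K%:R - 2) / 324) _ _
  hm (ler0n _ T) _ _ sum_exp_visits0_le) _.
- by apply: divr_ge0; [apply: mulr_ge0; [apply: mulr_ge0|] | ]; lra.
- move=> j hj; split.
  + rewrite -(play_expect_cst alg (dem K T j) T [::] T%:R).
    apply: play_expect_le => [|y]; first exact: demj_in01.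
    by rewrite add0n => <-; apply: visits_le_size.
  + rewrite -(play_expect_cst alg (dem K T 0) T [::] 0).
    by apply: play_expect_le => [p|y _]; [exact: (dem0_in01 _ _ _ K_ge2) | apply: visits_ge0].
  + by rewrite /= -(kappa_mul_T _ hj); apply: exp_visits_le.
- by rewrite ler_wpM2r.
Qed.

Lemma exp_regret_ge : eps K T * T%:R / 20 <= exp_regret K T alg.
Proof.
have hK := K_ge4r; have e0 := eps_ge0 K T; have T0 : (0 : RR) <= T%:R by [].
rewrite exp_regretE; last by move=> j hj; apply: sum_Qj.
rewrite ler_pdivlMl ?subr_gt0; last lra.
apply: le_trans (_ : \sum_(2 <= j < K) (eps K T * T%:R / 2 - eps K T / 2 *
    play_expect alg (dem K T j) [::] T (visits K j alg)) <= _); last first.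
  by rewrite !big_nat ler_sum // => j hj; apply: exp_fb_regret_ge.
rewrite sumrB sumr_const_nat -mulr_sumr -[_ *+ (K - 2)]mulr_natl natrB; last lia.
have := sum_exp_visits_le; have : 0 <= eps K T / 2 by lra.
move: (\sum_(_ <= _ < _ ) _) => S; nra.
Qed.

End Instance.

Lemma eps_mul_T_ge K T : (4 <= K)%N -> (K ^ 3 <= T)%N ->
  (20 * 21)^-1 * Num.sqrt (K%:R * T%:R) <= eps K T * T%:R / 20.
Proof.
move=> K4 KT; have hK := K_ge4r _ K4; have hT := T_ge1r K T K4 KT.
have KT0 : 0 <= K%:R * T%:R :> RR by rewrite mulr_ge0.
have lhs0 : 0 <= (20 * 21)^-1 * Num.sqrt (K%:R * T%:R) :> RR.
  by rewrite mulr_ge0 ?sqrtr_ge0 // invr_ge0; lra.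
have rhs0 : 0 <= eps K T * T%:R / 20 by rewrite !mulr_ge0 ?eps_ge0 //; lra.
rewrite -(ler_pXn2r (isT : 0 < 2)%N) ?nnegrE //.
have -> : (eps K T * T%:R / 20) ^+ 2 = eps K T ^+ 2 * T%:R ^+ 2 / 400 by field.
rewrite (eps_sqr K T K4 KT) exprMn sqr_sqrtr //.
have -> : (K%:R - 2) / (216 * T%:R) * T%:R ^+ 2 / 400 = (K%:R - 2) * T%:R / (216 * 400) :> RR.
  by field; apply/eqP; lra.
have -> : (20 * 21)^-1 ^+ 2 * (K%:R * T%:R) = K%:R * T%:R / (420 * 420) :> RR by field.
nra.
Qed.

Theorem mainTheorem10 :
  exists c : RR, 0 < c /\
  forall (K T : nat), (4 <= K)%N -> (K ^ 3 <= T)%N ->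
  forall (d : measure_display) (Omega : measurableType d)
         (P : probability Omega RR) (A : Omega -> policy),
    (forall w h, 0 <= A w h <= 1) ->
    (forall h, measurable_fun setT ((fun w => A w h) : Omega -> measurableTypeR RR)) ->
    ((c * Num.sqrt (K%:R * T%:R))%:E <= \int[P]_w (exp_regret K T (A w))%:E)%E.
Proof.
exists (20 * 21)^-1; split; first by rewrite invr_gt0; lra.
move=> K T K4 KT d Omega P A A01 _.
set c := (20 * 21)^-1 * _.
have c0 : 0 <= c by rewrite mulr_ge0 ?sqrtr_ge0 // invr_ge0; lra.
have lb w : (c%:E <= (exp_regret K T (A w))%:E)%E.
  rewrite lee_fin (le_trans (eps_mul_T_ge _ _ K4 KT)) //.
  exact: (@exp_regret_ge K T K4 KT (A w) (A01 w)).
have <- : (\int[P]_w (cst c%:E) w = c%:E)%E.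
  by rewrite integral_cst // -[RHS]mule1; congr (_ * _)%E; exact: probability_setT.
rewrite !ge0_integralTE => [|w|w]; last 2 first.
- exact: le_trans (lb w).
- by rewrite lee_fin.
apply: ereal_sup_le => x [h hh <-]; exists h => //= w.
exact: le_trans (hh w) (lb w).
Qed.
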